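(* Let $f:[0,\infty)\to[0,1]$ be a $C^1$, non-decreasing function with $f(0)=0$ and $f'(0)\ge\lambda$ for some fixed $\lambda>0$. Then for every $\epsilon>0$ there exists a piecewise linear function $\widetilde f$ consisting of only finitely many line segments such that $\frac{|f(t)-\widetilde f(t)|}{f(t)}\le\epsilon$ for all $t>0$. *)

From Stdlib Require Import Reals.
From Coquelicot Require Import Coquelicot.
Open Scope R_scope.

(* f : R -> R is C^1 on [0, +oo): there is a derivative function df such that
   f has derivative df t at every t > 0, right derivative df 0 at 0,
   df is continuous at every t > 0 and right-continuous at 0.
   (Values of f at negative arguments are irrelevant.) *)
Definition C1_on_nonneg (f df : R -> R) : Prop :=
  (forall t, 0 < t -> is_derive f t (df t)) /\
  filterlim (fun h => (f h - f 0) / h) (at_right 0) (locally (df 0)) /\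
  (forall t, 0 < t -> continuous df t) /\
  filterlim df (at_right 0) (locally (df 0)).

(* g is a (continuous) piecewise linear function on [0, +oo) made of finitely
   many pieces: breakpoints 0 = t_0 < t_1 < ... < t_n, g affine (a_i x + b_i)
   on each [t_i, t_{i+1}] and affine (a_n x + b_n) on [t_n, +oo). Closed
   intervals overlap at breakpoints, so g is continuous there. *)
Definition piecewise_linear_fin (g : R -> R) : Prop :=
  exists (n : nat) (t a b : nat -> R),
    t 0%nat = 0 /\
    (forall i, (i < n)%nat -> t i < t (S i)) /\
    (forall i x, (i < n)%nat -> t i <= x <= t (S i) -> g x = a i * x + b i) /\
    (forall x, t n <= x -> g x = a n * x + b n).

(* Near 0, f(t)/t tends to f'(0) > 0, so the chord through (0,0) and (δ, f δ)
   approximates f with small relative error on [0, δ]. Beyond δ we have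
   f >= f δ > 0, so a small absolute error suffices: being bounded and
   non-decreasing, f is within η of its supremum after some time T, and on the
   compact interval [δ, T] uniform continuity lets a linear interpolation on a
   fine grid stay within η of the monotone function f. A constant tail beyond T
   completes the approximation. *)
From Stdlib Require Import Reals Lra Lia Classical.
From Coquelicot Require Import Coquelicot.
Open Scope R_scope.

(* [piecewise_linear_fin] with the last breakpoint pinned to [c], so that new
   segments can be appended after it. *)
Definition pl_upto (g : R -> R) (c : R) : Prop :=
  exists (n : nat) (t a b : nat -> R),
    t 0%nat = 0 /\
    (forall i, (i < n)%nat -> t i < t (S i)) /\
    (forall i x, (i < n)%nat -> t i <= x <= t (S i) -> g x = a i * x + b i) /\
    (forall x, t n <= x -> g x = a n * x + b n) /\ t n = c.

Lemma pl_upto_piecewise_linear_fin g c : pl_upto g c -> piecewise_linear_fin g.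
Proof.
  intros [n [t [a [b [Ht0 [Hinc [Hpiece [Htail _]]]]]]]].
  now exists n, t, a, b.
Qed.

Lemma pl_upto_affine a b c : 0 < c -> pl_upto (fun x => a * x + b) c.
Proof.
  intros Hc.
  exists 1%nat, (fun i => match i with O => 0 | _ => c end), (fun _ => a), (fun _ => b).
  repeat split; intros; try reflexivity.
  assert (i = 0%nat) by lia; subst; exact Hc.
Qed.

Lemma increasing_le_last (t : nat -> R) n :
  (forall i, (i < n)%nat -> t i < t (S i)) -> forall i, (i <= n)%nat -> t i <= t n.
Proof.
  intros Hinc i Hi. induction n as [|n IH].
  - replace i with 0%nat by lia. lra.
  - destruct (Nat.eq_dec i (S n)) as [->|Hne]; [lra|].
    assert (t i <= t n) by (apply IH; [intros; apply Hinc|]; lia).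
    assert (t n < t (S n)) by (apply Hinc; lia). lra.
Qed.

(* [c'] is a breakpoint at which nothing changes; it only pins the last
   breakpoint so that further segments can be appended. *)
Lemma pl_upto_append g c c' s : pl_upto g c -> c < c' ->
  pl_upto (fun x => if Rle_dec x c then g x else g c + s * (x - c)) c'.
Proof.
  intros [n [t [a [b [Ht0 [Hinc [Hpiece [Htail Htn]]]]]]]] Hcc'.
  exists (S n), (fun i => if Nat.leb i n then t i else c'),
    (fun i => if Nat.ltb i n then a i else s),
    (fun i => if Nat.ltb i n then b i else g c - s * c).
  repeat split.
  - exact Ht0.
  - intros i Hi. rewrite (proj2 (Nat.leb_le i n)) by lia.
    destruct (Nat.leb (S i) n) eqn:E.
    + apply Hinc. apply Nat.leb_le in E. lia.
    + apply Nat.leb_gt in E. replace i with n by lia. lra.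
  - intros i x Hi Hx. rewrite (proj2 (Nat.leb_le i n)) in Hx by lia.
    destruct (Nat.ltb i n) eqn:E.
    + apply Nat.ltb_lt in E. rewrite (proj2 (Nat.leb_le (S i) n)) in Hx by lia.
      assert (t (S i) <= t n) by (apply increasing_le_last; auto).
      destruct (Rle_dec x c); [apply Hpiece; auto | lra].
    + apply Nat.ltb_ge in E. replace i with n in Hx by lia.
      destruct (Rle_dec x c).
      * replace x with c by lra. ring.
      * ring.
  - intros x Hx. rewrite (proj2 (Nat.ltb_ge (S n) n)) by lia.
    rewrite (proj2 (Nat.leb_gt (S n) n)) in Hx by lia.
    destruct (Rle_dec x c); [lra | ring].
  - now rewrite (proj2 (Nat.leb_gt (S n) n)) by lia.
Qed.

Lemma Rabs_sub_le_between x y lo hi :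
  lo <= x <= hi -> lo <= y <= hi -> Rabs (x - y) <= hi - lo.
Proof. intros. apply Rabs_le. lra. Qed.

Lemma chord_close_to_derivative f d0 eps :
  f 0 = 0 -> 0 < d0 -> 0 < eps ->
  filterlim (fun h => (f h - f 0) / h) (at_right 0) (locally d0) ->
  exists delta, 0 < delta /\
    forall t, 0 < t <= delta -> 0 < f t /\ Rabs (f t - f delta / delta * t) <= eps * f t.
Proof.
  intros Hf0 Hd0 Heps Hlim.
  set (e := Rmin (d0 / 2) (eps * d0 / 4)).
  assert (He : 0 < e) by (apply Rmin_pos; nra).
  assert (He1 : e <= d0 / 2) by apply Rmin_l.
  assert (He2 : e <= eps * d0 / 4) by apply Rmin_r.
  destruct (proj1 (filterlim_locally _ _) Hlim (mkposreal e He)) as [[d Hd] Hnear].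
  assert (Hratio : forall t, 0 < t <= d / 2 -> d0 - e < f t / t < d0 + e).
  { intros t Ht.
    assert (Hball : ball 0 d t).
    { change (Rabs (t - 0) < d). rewrite Rminus_0_r, Rabs_pos_eq; simpl; lra. }
    specialize (Hnear t Hball (proj1 Ht)).
    change (Rabs ((f t - f 0) / t - d0) < e) in Hnear.
    rewrite Hf0, Rminus_0_r in Hnear. apply Rabs_def2 in Hnear. lra. }
  exists (d / 2). simpl in Hd.
  assert (Hdelta : 0 < d / 2) by lra.
  destruct (Hratio (d / 2) (conj Hdelta (Rle_refl _))) as [Hr1 Hr2].
  set (r := f (d / 2) / (d / 2)) in *.
  split; [exact Hdelta|]. intros t Ht. destruct (Hratio t Ht) as [Hrt1 Hrt2].
  set (rt := f t / t) in *.
  replace (f t) with (t * rt) by (unfold rt; field; lra).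
  split; [nra|].
  replace (t * rt - r * t) with (t * (rt - r)) by ring.
  rewrite Rabs_mult, Rabs_pos_eq by lra.
  replace (eps * (t * rt)) with (t * (eps * rt)) by ring.
  apply Rmult_le_compat_l; [lra|].
  apply Rabs_le. split; nra.
Qed.

Lemma continuous_grid_increments f a b eta :
  a <= b -> 0 < eta -> (forall x, a <= x <= b -> continuous f x) ->
  exists N, (0 < N)%nat /\ forall k, (k < N)%nat ->
    Rabs (f (a + INR (S k) * ((b - a) / INR N)) - f (a + INR k * ((b - a) / INR N)))
      <= eta.
Proof.
  intros Hab Heta Hcont.
  assert (Hunif : uniform_continuity f (fun x => a <= x <= b)).
  { apply Heine; [apply compact_P3|].
    intros x Hx. now apply continuity_pt_filterlim, Hcont. }
  destruct (Hunif (mkposreal eta Heta)) as [[delta Hdelta] Hclose]. simpl in Hclose.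
  assert (Hq : 0 <= (b - a) / delta) by (apply Rdiv_le_0_compat; lra).
  destruct (nfloor_ex _ Hq) as [n [_ Hn]].
  exists (S n). split; [lia|].
  rewrite S_INR. set (h := (b - a) / (INR n + 1)).
  assert (Hn0 := pos_INR n).
  assert (Hh : 0 <= h) by (apply Rdiv_le_0_compat; lra).
  assert (Hhd : h < delta).
  { apply Rlt_div_l; [lra|]. apply Rlt_div_l in Hn; lra. }
  intros k Hk.
  assert (Hk' : INR (S k) <= INR n + 1) by (rewrite <- S_INR; apply le_INR; lia).
  assert (Hnh : (INR n + 1) * h = b - a) by (unfold h; field; lra).
  rewrite S_INR in *. assert (Hk0 := pos_INR k).
  apply Rlt_le, Hclose; try nra.
  replace (a + (INR k + 1) * h - (a + INR k * h)) with h by ring.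
  rewrite Rabs_pos_eq; lra.
Qed.

Lemma bounded_above_near_sup (f : R -> R) M eta :
  (forall t, 0 <= t -> f t <= M) -> 0 < eta ->
  exists T, 0 <= T /\ forall t, 0 <= t -> f t <= f T + eta.
Proof.
  intros HM Heta.
  set (E := fun y => exists t, 0 <= t /\ y = f t).
  assert (HE : exists y, E y) by (exists (f 0), 0; split; lra).
  assert (Hbound : bound E) by (exists M; intros y [t [Ht ->]]; auto).
  destruct (completeness E Hbound HE) as [L [HLub HLleast]].
  destruct (classic (exists T, 0 <= T /\ L - eta < f T)) as [[T [HT HfT]]|Hnone].
  - exists T. split; [exact HT|]. intros t Ht.
    assert (f t <= L) by (apply HLub; exists t; split; lra). lra.
  - exfalso. assert (L <= L - eta); [|lra].
    apply HLleast. intros y [t [Ht ->]].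
    apply Rnot_lt_le. intros Hlt. apply Hnone. now exists t.
Qed.

Section MonotoneApproximation.

Variable f : R -> R.
Hypothesis f_nondecreasing : forall s t, 0 <= s -> s <= t -> f s <= f t.

Lemma interpolate_on_grid g c h eta N :
  0 <= c -> 0 < h -> 0 <= eta -> pl_upto g c -> g c = f c ->
  (forall k, (k < N)%nat -> f (c + INR (S k) * h) - f (c + INR k * h) <= eta) ->
  exists g', pl_upto g' (c + INR N * h) /\ g' (c + INR N * h) = f (c + INR N * h) /\
    (forall x, x <= c -> g' x = g x) /\
    (forall t, c <= t <= c + INR N * h -> Rabs (f t - g' t) <= eta).
Proof.
  intros Hc Hh Heta Hg Hgc. induction N as [|N IH]; intros Hstep.
  - exists g. rewrite Rmult_0_l, Rplus_0_r.
    repeat split; auto. intros t Ht. replace t with c by lra.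
    now rewrite Hgc, Rminus_eq_0, Rabs_R0.
  - destruct IH as [g' [Hg' [Hg'end [Hg'g Hg'err]]]].
    { intros k Hk. apply Hstep. lia. }
    assert (HN := pos_INR N). rewrite S_INR in *.
    set (u := c + INR N * h) in *.
    set (u' := c + (INR N + 1) * h).
    assert (Hu' : u' = u + h) by (unfold u', u; ring).
    assert (Hmono : f u <= f u') by (apply f_nondecreasing; unfold u in *; nra).
    assert (Hinc : f u' - f u <= eta).
    { specialize (Hstep N (Nat.lt_succ_diag_r N)). rewrite S_INR in Hstep. exact Hstep. }
    set (s := (f u' - f u) / h).
    assert (Hsh : s * h = f u' - f u) by (unfold s; field; lra).
    assert (Hs : 0 <= s) by (unfold s; apply Rdiv_le_0_compat; lra).
    exists (fun x => if Rle_dec x u then g' x else g' u + s * (x - u)).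
    split; [|split; [|split]].
    + apply pl_upto_append; [exact Hg' | lra].
    + destruct (Rle_dec u' u); [lra|]. rewrite Hg'end. replace (u' - u) with h by lra. lra.
    + intros x Hx. destruct (Rle_dec x u); [now apply Hg'g | unfold u in *; nra].
    + intros t Ht. destruct (Rle_dec t u); [apply Hg'err; lra|].
      rewrite Hg'end.
      assert (f u <= f t) by (apply f_nondecreasing; unfold u in *; nra).
      assert (f t <= f u') by (apply f_nondecreasing; unfold u' in *; nra).
      assert (0 <= s * (t - u) <= s * h) by (split; nra).
      apply Rle_trans with (f u' - f u); [|exact Hinc].
      apply Rabs_sub_le_between; lra.
Qed.

Lemma extend_pl_uniform_approx g c M eta :
  0 < c -> pl_upto g c -> g c = f c -> (forall x, c <= x -> continuous f x) ->
  (forall t, 0 <= t -> f t <= M) -> 0 < eta ->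
  exists g', piecewise_linear_fin g' /\ (forall x, x <= c -> g' x = g x) /\
    (forall t, c <= t -> Rabs (f t - g' t) <= eta).
Proof.
  intros Hc Hg Hgc Hcont HM Heta.
  destruct (bounded_above_near_sup f M eta HM Heta) as [T0 [HT0 Hsup]].
  set (T := Rmax T0 c + 1).
  assert (HT0T : T0 < T) by (pose proof (Rmax_l T0 c); unfold T; lra).
  assert (HcT : c < T) by (pose proof (Rmax_r T0 c); unfold T; lra).
  destruct (continuous_grid_increments f c T eta ltac:(lra) Heta) as [N [HN Hgrid]].
  { intros x Hx. apply Hcont. lra. }
  set (h := (T - c) / INR N) in Hgrid.
  assert (HN' : 0 < INR N) by (apply lt_0_INR; exact HN).
  assert (Hh : 0 < h) by (apply Rdiv_lt_0_compat; lra).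
  destruct (interpolate_on_grid g c h eta N) as [g' [Hg' [Hg'T [Hg'g Hg'err]]]];
    try (assumption || lra).
  { intros k Hk. eapply Rle_trans; [apply Rle_abs | apply Hgrid, Hk]. }
  replace (c + INR N * h) with T in * by (unfold h; field; lra).
  exists (fun x => if Rle_dec x T then g' x else g' T + 0 * (x - T)).
  split; [|split].
  - apply pl_upto_piecewise_linear_fin with (T + 1).
    apply pl_upto_append; [exact Hg' | lra].
  - intros x Hx. destruct (Rle_dec x T); [now apply Hg'g | lra].
  - intros t Ht. destruct (Rle_dec t T); [apply Hg'err; lra|].
    rewrite Hg'T.
    assert (f T0 <= f T) by (apply f_nondecreasing; lra).
    assert (f T <= f t) by (apply f_nondecreasing; lra).
    assert (f t <= f T0 + eta) by (apply Hsup; lra).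
    rewrite Rabs_pos_eq; lra.
Qed.

End MonotoneApproximation.

Theorem theorem3 (f df : R -> R) (lambda : R)
  (Hlambda : 0 < lambda)
  (HC1 : C1_on_nonneg f df)
  (Hrange : forall t, 0 <= t -> 0 <= f t <= 1)
  (Hmono : forall s t, 0 <= s -> s <= t -> f s <= f t)
  (H0 : f 0 = 0)
  (Hd0 : lambda <= df 0) :
  forall eps : R, 0 < eps ->
    exists g : R -> R, piecewise_linear_fin g /\
      forall t, 0 < t -> Rabs (f t - g t) / f t <= eps.
Proof.
  intros eps Heps. destruct HC1 as [Hder [Hlim _]].
  destruct (chord_close_to_derivative f (df 0) eps H0 ltac:(lra) Heps Hlim)
    as [delta [Hdelta Hstart]].
  assert (Hfdelta : 0 < f delta) by exact (proj1 (Hstart delta (conj Hdelta (Rle_refl _)))).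
  destruct (extend_pl_uniform_approx f Hmono (fun x => f delta / delta * x + 0)
              delta 1 (eps * f delta)) as [g [Hg [Hgstart Hgerr]]].
  all: try (assumption || nra).
  - now apply pl_upto_affine.
  - field. lra.
  - intros x Hx. apply (@ex_derive_continuous R_AbsRing R_NormedModule).
    exists (df x). apply Hder. lra.
  - intros t Ht. apply Hrange, Ht.
  - exists g. split; [exact Hg|]. intros t Ht.
    destruct (Rle_dec t delta) as [Htd|Htd].
    + destruct (Hstart t (conj Ht Htd)) as [Hft Herr].
      apply Rle_div_l; [exact Hft|].
      now rewrite Hgstart, Rplus_0_r.
    + assert (f delta <= f t) by (apply Hmono; lra).
      apply Rle_div_l; [lra|].
      apply Rle_trans with (eps * f delta); [apply Hgerr; lra | nra].
Qed.
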